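(* Let $a,b$ be real constants with $|a|,|b|\le 0.01$ and define, for real $x>1$, \[f(x)=\frac{(x+a)(x+1)+2b-2\sqrt{x^3+ax+b}\,\sqrt{1+a+b}}{(1-x)^2}.\] Then $f(x)\le 2$ for all $x>1$. *)

From Stdlib Require Import Reals.
Open Scope R_scope.

Definition fA2 (a b x : R) : R :=
  ((x + a) * (x + 1) + 2 * b - 2 * sqrt (x ^ 3 + a * x + b) * sqrt (1 + a + b))
  / (1 - x) ^ 2.

(* Clearing the denominator, [f x <= 2] says that the excess
   [E x = (x + a)(x + 1) + 2b - 2(1 - x)^2] is at most [2 sqrt P sqrt Q] with
   [P = x^3 + ax + b] and [Q = 1 + a + b].  This is trivial where [E x <= 0],
   which for small [a, b] covers all [x >= 6].  Otherwise it suffices that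
   [E x ^ 2 <= 4 P Q].  The two sides agree to second order at [x = 1], so
   [4 P Q - E x ^ 2 = (x - 1)^2 g x] with a concave quadratic [g] that is
   positive on [1 < x < 6] when [a] and [b] are small. *)

From Stdlib Require Import Reals Lra Psatz.
Open Scope R_scope.

Lemma Rabs_le_inv (x r : R) : Rabs x <= r -> - r <= x <= r.
Proof.
  intros hx. pose proof (Rle_abs x). pose proof (Rle_abs (- x)).
  rewrite Rabs_Ropp in *. lra.
Qed.

Lemma le_sqrt_of_pow2_le (y c : R) : y ^ 2 <= c -> y <= sqrt c.
Proof.
  intros hyc. destruct (Rle_lt_dec y 0) as [hy | hy].
  - pose proof (sqrt_pos c). lra.
  - rewrite <- (sqrt_pow2 y) by lra. now apply sqrt_le_1_alt.
Qed.

Definition excess (a b x : R) : R := (x + a) * (x + 1) + 2 * b - 2 * (1 - x) ^ 2.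

Definition cofactor (a b x : R) : R :=
  - x ^ 2 + (12 + 6 * a + 4 * b) * x + 4 * b * (1 + a + b) - (a + 2 * b - 2) ^ 2.

Lemma excess_discriminant (a b x : R) :
  4 * (x ^ 3 + a * x + b) * (1 + a + b) - excess a b x ^ 2
  = (x - 1) ^ 2 * cofactor a b x.
Proof. unfold excess, cofactor. ring. Qed.

Lemma fA2_le_2 (a b x : R) :
  x <> 1 -> excess a b x <= 2 * sqrt (x ^ 3 + a * x + b) * sqrt (1 + a + b) ->
  fA2 a b x <= 2.
Proof.
  intros hx1 hE. unfold fA2, excess in *.
  assert (hden : 0 < (1 - x) ^ 2) by (rewrite <- Rsqr_pow2; apply Rsqr_pos_lt; lra).
  apply Rmult_le_reg_r with ((1 - x) ^ 2); [exact hden |].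
  unfold Rdiv. rewrite Rmult_assoc, Rinv_l by lra. lra.
Qed.

Section SmallCoefficients.

Variables a b : R.
Hypothesis ha : - (1 / 100) <= a <= 1 / 100.
Hypothesis hb : - (1 / 100) <= b <= 1 / 100.

Lemma excess_pos_lt (x : R) : 0 < excess a b x -> x < 6.
Proof. unfold excess. nra. Qed.

Lemma cofactor_pos (x : R) : 1 < x < 6 -> 0 < cofactor a b x.
Proof.
  intros hx. unfold cofactor.
  assert (hQ : - (1 / 10) <= 4 * b * (1 + a + b)) by nra.
  assert (hc : (a + 2 * b - 2) ^ 2 <= 5) by nra.
  nra.
Qed.

Lemma excess_le_sqrt (x : R) :
  1 < x -> excess a b x <= 2 * sqrt (x ^ 3 + a * x + b) * sqrt (1 + a + b).
Proof.
  intros hx.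
  destruct (Rle_lt_dec (excess a b x) 0) as [hE | hE].
  - pose proof (sqrt_pos (x ^ 3 + a * x + b)).
    pose proof (sqrt_pos (1 + a + b)). nra.
  - assert (hP : 0 <= x ^ 3 + a * x + b) by nra.
    assert (hQ : 0 <= 1 + a + b) by lra.
    assert (hg := cofactor_pos x (conj hx (excess_pos_lt x hE))).
    assert (hsq : excess a b x ^ 2 <= 2 ^ 2 * ((x ^ 3 + a * x + b) * (1 + a + b))).
    { pose proof (excess_discriminant a b x).
      assert (0 <= (x - 1) ^ 2 * cofactor a b x) by (apply Rmult_le_pos; nra).
      lra. }
    apply le_sqrt_of_pow2_le in hsq.
    rewrite sqrt_mult, sqrt_mult, sqrt_pow2 in hsq by nra. lra.
Qed.

End SmallCoefficients.

Theorem lemmaA2 (a b : R) (ha : Rabs a <= (1/100)) (hb : Rabs b <= (1/100)) :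
  forall x : R, 1 < x -> fA2 a b x <= 2.
Proof.
  intros x hx. apply fA2_le_2; [lra |].
  apply excess_le_sqrt; auto using Rabs_le_inv.
Qed.
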